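(* Let $a,\lambda\in\mathbb{R}^n$ with $\|a\|=\|\lambda\|=1$ and $\lambda\neq\pm a$, and let $d\in\mathbb{R}^m$ with $\|d\|\le1$. Fix $y\in\mathbb{R}^m$. The Lagrangian dual of $$(P)\qquad \max_x\{\lambda^\mathsf{T} x:\|x\|\le\|y\|,\ a^\mathsf{T} x+d^\mathsf{T} y\le0\}$$ is $$(D)\qquad \inf_\theta\{\|\lambda-\theta a\|\,\|y\|-\theta\,d^\mathsf{T} y:\theta\ge0\}.$$ An optimal solution of $(P)$ is $x(y)=\lambda\|y\|$ if $\lambda^\mathsf{T} a\|y\|+d^\mathsf{T} y\le0$, and otherwise $$x(y)=\sqrt{\tfrac{\|y\|^2-(d^\mathsf{T} y)^2}{1-(\lambda^\mathsf{T} a)^2}}\,\lambda-\Big(d^\mathsf{T} y+\lambda^\mathsf{T} a\sqrt{\tfrac{\|y\|^2-(d^\mathsf{T} y)^2}{1-(\lambda^\mathsf{T} a)^2}}\Big)a.$$ An optimal dual solution (with values in $\mathbb{R}_+\cup\{+\infty\}$) is $\theta(y)=0$ if $\lambda^\mathsf{T} a\|y\|+d^\mathsf{T} y\le0$, and otherwise $$\theta(y)=\lambda^\mathsf{T} a+d^\mathsf{T} y\,\frac{\sqrt{1-(\lambda^\mathsf{T} a)^2}}{\sqrt{\|y\|^2-(d^\mathsf{T} y)^2}},$$ with the conventions $1/0=+\infty$ and $r+(+\infty)=+\infty$ (a dual value at $\theta=+\infty$ meaning the limit as $\theta\to+\infty$). Strong duality holds, i.e. the optimal values of $(P)$ and $(D)$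 coincide, and the optimal value of $(P)$ equals $\|y\|$ if $\lambda^\mathsf{T} a\|y\|+d^\mathsf{T} y\le0$ and $\sqrt{(\|y\|^2-(d^\mathsf{T} y)^2)(1-(\lambda^\mathsf{T} a)^2)}-d^\mathsf{T} y\,\lambda^\mathsf{T} a$ otherwise. Finally, this formula for the optimal value of $(P)$ also holds when $\lambda=\pm a$.
   Context: $\|\cdot\|$ is the Euclidean norm. *)

From HB Require Import structures.
From mathcomp Require Import all_boot all_order all_algebra.
From mathcomp Require Import all_classical all_reals all_analysis.
Set Implicit Arguments. Unset Strict Implicit. Unset Printing Implicit Defensive.
Import Order.TTheory GRing.Theory Num.Theory.
Import numFieldNormedType.Exports.
Local Open Scope classical_set_scope.
Local Open Scope ring_scope.

Section Defs.
Variable R : realType.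

Definition dotv (k : nat) (u v : 'cV[R]_k) : R := (u^T *m v) 0 0.

(* Euclidean norm ||u|| (the library norm on matrices is the max-norm) *)
Definition enorm (k : nat) (u : 'cV[R]_k) : R := Num.sqrt (dotv u u).

Variables (n m : nat) (a lam : 'cV[R]_n) (d y : 'cV[R]_m).

Definition feasP : set 'cV[R]_n :=
  [set x | enorm x <= enorm y /\ dotv a x + dotv d y <= 0].

Definition optvalP : \bar R := ereal_sup [set (dotv lam x)%:E | x in feasP].

Definition lagrangian (theta : R) (x : 'cV[R]_n) : R :=
  dotv lam x - theta * (dotv a x + dotv d y).

Definition dualfun (theta : R) : \bar R :=
  ereal_sup [set (lagrangian theta x)%:E | x in [set x | enorm x <= enorm y]].

Definition objD (theta : R) : R :=
  enorm (lam - theta *: a) * enorm y - theta * dotv d y.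

Definition optvalD : \bar R := ereal_inf [set (objD theta)%:E | theta in [set t | 0 <= t]].

Definition caseP : Prop := dotv lam a * enorm y + dotv d y <= 0.

Definition sP : R :=
  Num.sqrt ((enorm y ^+ 2 - dotv d y ^+ 2) / (1 - dotv lam a ^+ 2)).

Definition xopt : 'cV[R]_n :=
  if `[< caseP >] then enorm y *: lam
  else sP *: lam - (dotv d y + dotv lam a * sP) *: a.

(* theta(y) with the conventions 1/0 = +oo and r + (+oo) = +oo:
   the division by sqrt(||y||^2-(d^T y)^2) = 0 gives +oo. *)
Definition thetaopt : \bar R :=
  if `[< caseP >] then 0%E
  else if Num.sqrt (enorm y ^+ 2 - dotv d y ^+ 2) == 0 then +oo%E
  else (dotv lam a + dotv d y * (Num.sqrt (1 - dotv lam a ^+ 2)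
         / Num.sqrt (enorm y ^+ 2 - dotv d y ^+ 2)))%:E.

Definition valformula : R :=
  if `[< caseP >] then enorm y
  else Num.sqrt ((enorm y ^+ 2 - dotv d y ^+ 2) * (1 - dotv lam a ^+ 2))
       - dotv d y * dotv lam a.

End Defs.

From HB Require Import structures.
From mathcomp Require Import all_boot all_order all_algebra.
From mathcomp Require Import all_classical all_reals all_analysis.
Import Order.TTheory GRing.Theory Num.Theory.
Import numFieldNormedType.Exports.
Local Open Scope classical_set_scope.
Local Open Scope ring_scope.
From mathcomp Require Import ring lra.
Set Implicit Arguments. Unset Strict Implicit.

(* Write s = ||y||, t = d^T y, c = lam^T a.  Weak duality is Cauchy-Schwarz:
   for feasible x and theta >= 0,
     lam^T x <= (lam - theta a)^T x - theta t <= ||lam - theta a|| s - theta t,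
   so sup (P) <= inf (D).  The point x(y) is feasible with value equal to the
   formula V, and the dual objective attains V at theta(y); when theta(y) is
   infinite (t = s > 0) it only approaches V from above, with an error of
   order 1/theta.  Hence both optimal values are V; nothing here needs
   lam <> a or lam <> -a. *)

Section InnerProduct.
Variables (R : realType) (k : nat).
Implicit Types u v w : 'cV[R]_k.

Lemma dotvE u v : dotv u v = \sum_i u i 0 * v i 0.
Proof. by rewrite /dotv !mxE; apply: eq_bigr => i _; rewrite mxE. Qed.

Lemma dotvC u v : dotv u v = dotv v u.
Proof. by rewrite !dotvE; apply: eq_bigr => i _; rewrite mulrC. Qed.

Lemma dotvDl u v w : dotv (u + v) w = dotv u w + dotv v w.
Proof. by rewrite !dotvE -big_split; apply: eq_bigr => i _; rewrite mxE mulrDl. Qed.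

Lemma dotvZl (r : R) u w : dotv (r *: u) w = r * dotv u w.
Proof. by rewrite !dotvE mulr_sumr; apply: eq_bigr => i _; rewrite mxE mulrA. Qed.

Lemma dotvNl u w : dotv (- u) w = - dotv u w.
Proof. by rewrite -scaleN1r dotvZl mulN1r. Qed.

Lemma dotvBl u v w : dotv (u - v) w = dotv u w - dotv v w.
Proof. by rewrite dotvDl dotvNl. Qed.

Lemma dotvZr (r : R) u w : dotv w (r *: u) = r * dotv w u.
Proof. by rewrite !(dotvC w) dotvZl. Qed.

Lemma dotvBr u v w : dotv w (u - v) = dotv w u - dotv w v.
Proof. by rewrite !(dotvC w) dotvBl. Qed.

Lemma dotv0l w : dotv 0 w = 0.
Proof. by rewrite -(scale0r 0) dotvZl mul0r. Qed.

Lemma dotvv_ge0 u : 0 <= dotv u u.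
Proof. by rewrite dotvE; apply: sumr_ge0 => i _; rewrite -expr2 sqr_ge0. Qed.

Lemma dotvv_eq0 u : dotv u u = 0 -> u = 0.
Proof.
rewrite dotvE => /psumr_eq0P u0; apply/matrixP => i j.
rewrite ord1 mxE; apply/eqP; rewrite -sqrf_eq0 expr2.
by apply/eqP/u0 => // l _; rewrite -expr2 sqr_ge0.
Qed.

Lemma enorm_ge0 u : 0 <= enorm u.
Proof. exact: sqrtr_ge0. Qed.

Lemma enorm_sqr u : enorm u ^+ 2 = dotv u u.
Proof. by rewrite sqr_sqrtr // dotvv_ge0. Qed.

Lemma enorm_eq0 u : enorm u = 0 -> u = 0.
Proof. by move=> u0; apply: dotvv_eq0; rewrite -enorm_sqr u0 expr0n. Qed.

Lemma enormZ (r : R) u : enorm (r *: u) = `|r| * enorm u.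
Proof.
by rewrite /enorm dotvZl dotvZr mulrA -expr2 sqrtrM ?sqr_ge0 // sqrtr_sqr.
Qed.

Lemma enormN u : enorm (- u) = enorm u.
Proof. by rewrite -scaleN1r enormZ normrN normr1 mul1r. Qed.

Lemma enorm_le_sqr u (r : R) : 0 <= r -> (enorm u <= r) = (dotv u u <= r ^+ 2).
Proof. by move=> r0; rewrite -(ler_sqrt _ (sqr_ge0 r)) sqrtr_sqr ger0_norm. Qed.

Lemma unit_dotvv u : enorm u = 1 -> dotv u u = 1.
Proof. by move=> u1; rewrite -enorm_sqr u1 expr1n. Qed.

Lemma cauchy_schwarz u v : dotv u v <= enorm u * enorm v.
Proof.
have [/enorm_eq0 ->|u0] := eqVneq (enorm u) 0.
  by rewrite dotv0l mulr_ge0 ?enorm_ge0.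
have [/enorm_eq0 ->|v0] := eqVneq (enorm v) 0.
  by rewrite dotvC dotv0l mulr_ge0 ?enorm_ge0.
have p_gt0 : 0 < enorm u * enorm v.
  by rewrite mulr_gt0 // lt0r ?u0 ?v0 enorm_ge0.
have := dotvv_ge0 (enorm v *: u - enorm u *: v).
rewrite dotvBl !dotvBr !dotvZl !dotvZr -!enorm_sqr (dotvC v u) => h.
by rewrite -(ler_pM2l p_gt0); nra.
Qed.

Lemma normr_dotv_le u v : `|dotv u v| <= enorm u * enorm v.
Proof.
rewrite ler_norml cauchy_schwarz andbT lerNl.
by rewrite -dotvNl -(enormN u) cauchy_schwarz.
Qed.

End InnerProduct.

Section ScalarFacts.
Variable R : rcfType.

(* Only an inequality because x / 0 = 0. *)
Lemma divrK_le (x r : R) : 0 <= x -> 0 <= r -> x / r * r <= x.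
Proof. by move=> x0 r0; have [->|/divfK ->] := eqVneq r 0; rewrite ?mulr0. Qed.

Lemma sqrtr_divK (x r : R) : 0 <= x -> 0 <= r ->
  Num.sqrt (x / r) * r = Num.sqrt (x * r).
Proof.
move=> x0 r0; have [->|r_neq0] := eqVneq r 0; first by rewrite !mulr0 sqrtr0.
rewrite -{2}(ger0_norm r0) -sqrtr_sqr -sqrtrM ?divr_ge0 //.
by rewrite expr2 mulrA divfK.
Qed.

Lemma sqrtr_sqrD_le (u r : R) : 0 < u -> 0 <= r ->
  Num.sqrt (u ^+ 2 + r) <= u + r / u.
Proof.
move=> u0 r0; have ru0 : 0 <= r / u by rewrite divr_ge0 // ltW.
rewrite -(ger0_norm (_ : 0 <= u + r / u)); last by rewrite addr_ge0 // ltW.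
rewrite -sqrtr_sqr ler_sqrt ?sqr_ge0 //.
have -> : (u + r / u) ^+ 2 = u ^+ 2 + 2 * r + (r / u) ^+ 2.
  by rewrite !expr2; field; rewrite gt_eqF.
by have := sqr_ge0 (r / u); lra.
Qed.

Lemma dual_objective_at_opt (s t c S C : R) : 0 < S -> 0 <= C -> 0 <= s ->
  s ^+ 2 = S ^+ 2 + t ^+ 2 ->
  Num.sqrt ((c + t * (C / S) - c) ^+ 2 + C ^+ 2) * s - (c + t * (C / S)) * t
  = S * C - t * c.
Proof.
move=> S_gt0 C0 s0 es; have S_neq0 : S != 0 by rewrite gt_eqF.
have -> : (c + t * (C / S) - c) ^+ 2 + C ^+ 2 = (C * s / S) ^+ 2.
  have -> : (C * s / S) ^+ 2 = C ^+ 2 * s ^+ 2 / S ^+ 2 by rewrite !expr2; field.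
  by rewrite es; field.
rewrite sqrtr_sqr ger0_norm ?divr_ge0 ?mulr_ge0 // ?ltW //.
have -> : C * s / S * s = C * s ^+ 2 / S by rewrite expr2; field.
by rewrite es; field.
Qed.

(* With c = cos α, C = sin α, t = s cos β and S = s sin β, this says that
   sin (α + β) >= 0 as soon as cos α + cos β > 0. *)
Lemma sin_add_ge0 (s t c S C : R) : 0 <= s -> 0 <= S -> 0 <= C ->
  S ^+ 2 = s ^+ 2 - t ^+ 2 -> C ^+ 2 = 1 - c ^+ 2 ->
  0 < c * s + t -> 0 <= c * S + t * C.
Proof.
move=> s0 S0 C0 eS eC pos.
have prod_eq : (c * S + t * C) * (c * S - t * C) = (c * s + t) * (c * s - t).
  have -> : (c * S + t * C) * (c * S - t * C) = c ^+ 2 * S ^+ 2 - t ^+ 2 * C ^+ 2.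
    by ring.
  by rewrite eS eC; ring.
have [c0|c0] := leP 0 c; have [t0|t0] := leP 0 t.
- by rewrite addr_ge0 // mulr_ge0.
- have cS0 : 0 <= c * S by rewrite mulr_ge0.
  have tC0 : t * C <= 0 by rewrite mulr_le0_ge0 // ltW.
  have : 0 < (c * s + t) * (c * s - t) by rewrite mulr_gt0 //; nra.
  by rewrite -prod_eq; nra.
- have cS0 : c * S <= 0 by rewrite mulr_le0_ge0 // ltW.
  have tC0 : 0 <= t * C by rewrite mulr_ge0.
  have : (c * s + t) * (c * s - t) < 0 by rewrite pmulr_rlt0 //; nra.
  by rewrite -prod_eq; nra.
- nra.
Qed.

End ScalarFacts.

Section Duality.
Variables (R : realType) (n m : nat) (a lam : 'cV[R]_n) (d y : 'cV[R]_m).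
Hypotheses (ha : enorm a = 1) (hlam : enorm lam = 1) (hd : enorm d <= 1).

Local Notation s := (enorm y).
Local Notation t := (dotv d y).
Local Notation c := (dotv lam a).
Local Notation X := (s ^+ 2 - t ^+ 2).
Local Notation K := (1 - c ^+ 2).
Local Notation S := (Num.sqrt X).
Local Notation C := (Num.sqrt K).
Local Notation V := (valformula a lam d y).

Lemma normr_dotv_dy_le : `|t| <= s.
Proof.
apply: (le_trans (normr_dotv_le d y)).
by rewrite -[leRHS]mul1r ler_wpM2r ?enorm_ge0.
Qed.

Lemma normr_dotv_lam_a_le1 : `|c| <= 1.
Proof. by have := normr_dotv_le lam a; rewrite hlam ha mulr1. Qed.

Lemma X_ge0 : 0 <= X.
Proof.
rewrite subr_ge0 -real_normK ?num_real // ler_sqr ?nnegrE ?enorm_ge0 //.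
exact: normr_dotv_dy_le.
Qed.

Lemma K_ge0 : 0 <= K.
Proof.
rewrite subr_ge0 -real_normK ?num_real // -(expr1n _ 2) ler_sqr ?nnegrE //.
exact: normr_dotv_lam_a_le1.
Qed.

Lemma enorm_lam_subZa (theta : R) :
  enorm (lam - theta *: a) = Num.sqrt ((theta - c) ^+ 2 + K).
Proof.
rewrite /enorm dotvBl !dotvBr !dotvZl !dotvZr (dotvC a lam).
by rewrite unit_dotvv // unit_dotvv //; congr Num.sqrt; ring.
Qed.

Lemma weak_duality x theta : feasP a d y x -> 0 <= theta ->
  dotv lam x <= objD a lam d y theta.
Proof.
move=> [x_le lin_le] theta0; rewrite /objD.
have : dotv lam x <= dotv (lam - theta *: a) x - theta * t.
  by rewrite dotvBl dotvZl; nra.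
move/le_trans; apply; rewrite lerD2r.
apply: le_trans (cauchy_schwarz _ _) _.
by rewrite ler_wpM2l ?enorm_ge0.
Qed.

Lemma optvalP_le_optvalD : (optvalP a lam d y <= optvalD a lam d y)%E.
Proof.
apply: ge_ereal_sup => _ [x feas_x <-].
apply: le_ereal_inf_tmp => _ [theta theta0 <-].
by rewrite lee_fin weak_duality.
Qed.

Lemma dualfunE theta : dualfun a lam d y theta = (objD a lam d y theta)%:E.
Proof.
set w := lam - theta *: a.
have lagrangianE x : lagrangian a lam d y theta x = dotv w x - theta * t.
  by rewrite /lagrangian /w dotvBl dotvZl; ring.
apply/eqP; rewrite eq_le; apply/andP; split.
  apply: ge_ereal_sup => _ [x x_le <-]; rewrite lee_fin lagrangianE lerD2r.
  apply: le_trans (cauchy_schwarz _ _) _.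
  by rewrite /objD -/w ler_wpM2l ?enorm_ge0.
apply: ereal_sup_ubound; exists ((s / enorm w) *: w).
  by rewrite /= enormZ ger0_norm ?divr_ge0 ?enorm_ge0 // divrK_le ?enorm_ge0.
rewrite lagrangianE dotvZr -enorm_sqr /objD -/w.
have [->|w_neq0] := eqVneq (enorm w) 0; first by rewrite expr2 !mulr0 mul0r.
by rewrite expr2; congr (_%:E); field.
Qed.

Lemma xopt_feasible : feasP a d y (xopt a lam d y).
Proof.
rewrite /xopt; case: asboolP => [caseP_y|_]; split.
- by rewrite enormZ hlam mulr1 ger0_norm ?enorm_ge0.
- by rewrite dotvZr (dotvC a lam); move: caseP_y; rewrite /caseP; lra.
- set q := sP a lam d y.
  have q2 : q ^+ 2 = X / K by rewrite sqr_sqrtr ?divr_ge0 ?X_ge0 ?K_ge0.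
  have := divrK_le X_ge0 K_ge0; rewrite -q2 => q2K_le.
  rewrite enorm_le_sqr ?enorm_ge0 //.
  rewrite dotvBl !dotvBr !dotvZl !dotvZr (dotvC a lam) !unit_dotvv //.
  rewrite [leLHS](_ : _ = q ^+ 2 * K + t ^+ 2); [lra | ring].
- by rewrite dotvBr !dotvZr unit_dotvv // (dotvC a lam); lra.
Qed.

Lemma dotv_lam_xopt : dotv lam (xopt a lam d y) = V.
Proof.
rewrite /xopt /valformula; case: asboolP => _.
  by rewrite dotvZr unit_dotvv // mulr1.
rewrite dotvBr !dotvZr unit_dotvv // -(sqrtr_divK X_ge0 K_ge0) -/(sP a lam d y).
by ring.
Qed.

Lemma valformula_le_objD theta : 0 <= theta -> V <= objD a lam d y theta.
Proof. by rewrite -dotv_lam_xopt; apply/weak_duality/xopt_feasible. Qed.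

Lemma optvalD_attained theta : 0 <= theta -> objD a lam d y theta = V ->
  optvalD a lam d y = V%:E.
Proof.
move=> theta0 objD_theta; apply/eqP; rewrite eq_le; apply/andP; split.
  by apply: ereal_inf_lbound; exists theta => //; rewrite objD_theta.
apply: le_ereal_inf_tmp => _ [theta' theta'0 <-].
by rewrite lee_fin valformula_le_objD.
Qed.

Lemma objD0 : caseP a lam d y -> objD a lam d y 0 = V.
Proof.
move=> caseP_y; rewrite /objD scale0r subr0 hlam mul1r mul0r subr0.
by rewrite /valformula; case: asboolP.
Qed.

Section Interior.
Hypotheses (ncase : ~ caseP a lam d y) (S_neq0 : S != 0).

Lemma thetaopt_ge0 : 0 <= c + t * (C / S).
Proof.
have S_gt0 : 0 < S by rewrite lt0r S_neq0 sqrtr_ge0.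
have eS : S ^+ 2 = X by rewrite sqr_sqrtr ?X_ge0.
have eC : C ^+ 2 = K by rewrite sqr_sqrtr ?K_ge0.
have : 0 <= c * S + t * C.
  apply: (sin_add_ge0 (enorm_ge0 y) (sqrtr_ge0 _) (sqrtr_ge0 _) eS eC).
  by rewrite ltNge; apply/negP.
have -> : c + t * (C / S) = (c * S + t * C) / S by field.
by move=> num_ge0; rewrite divr_ge0 // ltW.
Qed.

Lemma objD_thetaopt : objD a lam d y (c + t * (C / S)) = V.
Proof.
have S_gt0 : 0 < S by rewrite lt0r S_neq0 sqrtr_ge0.
have eC : C ^+ 2 = K by rewrite sqr_sqrtr ?K_ge0.
have es : s ^+ 2 = S ^+ 2 + t ^+ 2 by rewrite sqr_sqrtr ?X_ge0 // subrK.
rewrite /objD /valformula; case: asboolP => // _.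
rewrite enorm_lam_subZa -[X in _ ^+ 2 + X]eC sqrtrM ?X_ge0 //.
by rewrite dual_objective_at_opt ?sqrtr_ge0 ?enorm_ge0.
Qed.

End Interior.

Section Degenerate.
Hypotheses (ncase : ~ caseP a lam d y) (S_eq0 : S = 0).

Lemma degenerate_dotv_dy : t = s /\ 0 < s.
Proof.
have X_le0 : X <= 0 by rewrite -sqrtr_eq0 S_eq0.
have X0 : (s - t) * (s + t) = 0 by have := X_ge0; lra.
have := normr_dotv_dy_le; have := normr_dotv_lam_a_le1; have := enorm_ge0 y.
move: ncase; rewrite /caseP => /negP; rewrite -ltNge.
rewrite !ler_norml => pos s0 /andP[c1 c2] /andP[t1 t2].
by move/eqP: X0; rewrite mulf_eq0 => /orP[|] /eqP st0; nra.
Qed.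

Lemma degenerate_valformula : V = - (c * s).
Proof.
have [ts _] := degenerate_dotv_dy.
rewrite /valformula; case: asboolP => // _.
have -> : X = 0 by rewrite ts subrr.
by rewrite mul0r sqrtr0 ts sub0r mulrC.
Qed.

Lemma degenerate_objD_le theta : c < theta ->
  objD a lam d y theta <= V + s * K / (theta - c).
Proof.
move=> c_lt_theta; have [ts s_gt0] := degenerate_dotv_dy.
rewrite /objD enorm_lam_subZa degenerate_valformula ts.
have -> : - (c * s) + s * K / (theta - c)
    = (theta - c + K / (theta - c)) * s - theta * s.
  by field; rewrite subr_eq0 gt_eqF.
by rewrite lerD2r ler_wpM2r ?sqrtr_sqrD_le ?K_ge0 ?subr_gt0 // ltW.
Qed.

Lemma degenerate_objD_near e : 0 < e ->
  \forall theta \near +oo, 0 <= theta /\ objD a lam d y theta <= V + e.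
Proof.
move=> e_gt0; have [_ s_gt0] := degenerate_dotv_dy.
have sKe0 : 0 <= s * K / e by rewrite divr_ge0 ?mulr_ge0 ?K_ge0 // ltW.
near=> theta; split.
  near: theta; apply: nbhs_pinfty_ge; exact: num_real.
have theta_ge : c + 1 + s * K / e <= theta.
  near: theta; apply: nbhs_pinfty_ge; exact: num_real.
apply: le_trans (degenerate_objD_le _) _; first lra.
rewrite lerD2l ler_pdivrMr ?subr_gt0; last lra.
by rewrite -ler_pdivrMl // mulrC; lra.
Unshelve. all: end_near.
Qed.

Lemma degenerate_optvalD : optvalD a lam d y = V%:E.
Proof.
apply/eqP; rewrite eq_le; apply/andP; split; last first.
  apply: le_ereal_inf_tmp => _ [theta theta0 <-].
  by rewrite lee_fin valformula_le_objD.
apply/lee_addgt0Pr => e e_gt0.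
have [theta [theta0 le]] := filter_ex (degenerate_objD_near e_gt0).
apply: ereal_inf_le; exists (objD a lam d y theta)%:E; first by exists theta.
by rewrite -EFinD lee_fin.
Qed.

Lemma degenerate_objD_cvg :
  (objD a lam d y theta)%:E @[theta --> +oo] --> V%:E.
Proof.
apply: cvg_EFin; first by near=> theta.
apply/cvgrPdist_le => e e_gt0.
near=> theta.
have [theta0 le] : 0 <= theta /\ objD a lam d y theta <= V + e.
  by near: theta; exact: degenerate_objD_near.
have := valformula_le_objD theta0.
by move=> ge; rewrite /= distrC ger0_norm ?subr_ge0 //; lra.
Unshelve. all: end_near.
Qed.

End Degenerate.

Lemma optvalDE : optvalD a lam d y = V%:E.
Proof.
have [caseP_y|ncase] := asboolP (caseP a lam d y).
  exact: optvalD_attained (lexx 0) (objD0 caseP_y).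
have [S_eq0|S_neq0] := eqVneq S 0; first exact: degenerate_optvalD.
exact: optvalD_attained (thetaopt_ge0 ncase S_neq0) (objD_thetaopt ncase S_neq0).
Qed.

Lemma optvalPE : optvalP a lam d y = V%:E.
Proof.
apply/eqP; rewrite eq_le -[X in (_ <= X)%E]optvalDE optvalP_le_optvalD /=.
apply: ereal_sup_ubound; exists (xopt a lam d y); first exact: xopt_feasible.
by rewrite dotv_lam_xopt.
Qed.

End Duality.

Theorem propositionA1 (R : realType) (n m : nat) (a lam : 'cV[R]_n)
    (d y : 'cV[R]_m)
    (ha : enorm a = 1) (hlam : enorm lam = 1) (hd : enorm d <= 1) :
  (* the optimal-value formula, valid for every unit lam (incl. lam = +-a) *)
  optvalP a lam d y = (valformula a lam d y)%:E /\
  (lam <> a -> lam <> - a ->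
    (* the Lagrangian dual function of (P) is the objective of (D) *)
    (forall theta : R, 0 <= theta ->
       dualfun a lam d y theta = (objD a lam d y theta)%:E) /\
    (* x(y) is an optimal solution of (P) *)
    (feasP a d y (xopt a lam d y) /\
     (dotv lam (xopt a lam d y))%:E = optvalP a lam d y) /\
    (* theta(y) in R_+ u {+oo} is an optimal solution of (D) *)
    ((0 <= thetaopt a lam d y)%E /\
     (forall r : R, thetaopt a lam d y = r%:E ->
        (objD a lam d y r)%:E = optvalD a lam d y) /\
     (thetaopt a lam d y = +oo%E ->
        (objD a lam d y t)%:E @[t --> +oo] --> optvalD a lam d y)) /\
    (* strong duality *)
    optvalP a lam d y = optvalD a lam d y).
Proof.
have optP := optvalPE y ha hlam hd; have optD := optvalDE y ha hlam hd.
split=> // _ _; split; first by move=> theta _; exact: dualfunE.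
split; first by split; [exact: xopt_feasible ha hlam hd | rewrite optP dotv_lam_xopt].
split; last by rewrite optP optD.
rewrite optD /thetaopt; case: asboolP => [caseP_y|ncase].
  by split=> //; split=> // r [<-]; rewrite objD0.
case: eqP => [S_eq0|/eqP S_neq0]; split=> //.
- by split=> // _; exact: degenerate_objD_cvg.
- by rewrite lee_fin thetaopt_ge0.
- by split=> // r [<-]; rewrite objD_thetaopt.
Qed.
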